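(* Let $X$ be an $\mathrm{OA}(N,k,2,t_1)$ and $Y$ an $\mathrm{OA}(N,k,2,t_2)$, both with symbols from $\{-1,1\}$, with strengths $t_1\ge1$ and $t_2\ge1$. Then $X$ and $Y$ are OD-equivalent if and only if the multiset of rows of $X$ equals the multiset of rows of $g(Y)$ for some $g\in G(k)^{\rm OD}$.
   Context: An $\mathrm{OA}(N,k,s,t)$ with $t\in\{0,\dots,k\}$ is an $N\times k$ array over an $s$-element symbol set such that in every $N\times t$ subarray each of the $s^t$ possible $t$-tuples appears exactly $N/s^t$ times as a row. Two $N\times k$ arrays $Y_1,Y_2$ over $\{-1,1\}$ are Hadamard equivalent if $Y_2=P_1D_1Y_1D_2P_2$ for permutation matrices $P_1,P_2$ and diagonal $\pm1$ matrices $D_1,D_2$ (i.e. obtained by signed permutations of rows and columns). $X_1,X_2$ are OD-equivalent if $[\mathbf{1},X_1]$ and $[\mathbf{1},X_2]$ are Hadamard equivalent. $G(k)^{\rm OD}$ is the group of permutations of $\{-1,1\}^k$ generated by coordinate permutations, sign changes of single coordinates, and $R_i(z_1,\dots,z_k)=(z_1z_i,\dots,z_{i-1}z_i,z_i,z_{i+1}z_i,\dots,z_kz_i)$ for $i=1,\dots,k$; it acts on arrays row by row. *)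

From mathcomp Require Import all_boot all_order all_algebra all_fingroup.
Set Implicit Arguments. Unset Strict Implicit. Unset Printing Implicit Defensive.
Import GRing.Theory Num.Theory.
Local Open Scope ring_scope.

Definition pm1_mx m n (A : 'M[int]_(m, n)) : bool :=
  [forall i, forall j, (A i j == 1) || (A i j == -1)].

(* OA(N,k,2,t) with symbol set {-1,1}: 0 <= t <= k, and for every choice of
   t distinct columns c and every t-tuple v over {-1,1}, v occurs as a row of
   the subarray exactly N/2^t times (stated as count * 2^t = N). *)
Definition isOA (N k t : nat) (X : 'M[int]_(N, k)) : Prop :=
  [/\ (t <= k)%N, pm1_mx X &
    forall c : 'I_t -> 'I_k, injective c ->
    forall v : 'I_t -> int, (forall j, v j = 1 \/ v j = -1) ->
      (#|[set i : 'I_N | [forall j, X i (c j) == v j]]| * 2 ^ t)%N = N].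

Definition hadamard_equiv m n (Y1 Y2 : 'M[int]_(m, n)) : Prop :=
  exists (s1 : 'S_m) (s2 : 'S_n) (d1 : 'rV[int]_m) (d2 : 'rV[int]_n),
    [/\ pm1_mx d1, pm1_mx d2 &
      Y2 = perm_mx s1 *m diag_mx d1 *m Y1 *m diag_mx d2 *m perm_mx s2].

Definition augment N k (X : 'M[int]_(N, k)) : 'M[int]_(N, 1 + k) :=
  row_mx (const_mx 1) X.

Definition OD_equiv N k (X1 X2 : 'M[int]_(N, k)) : Prop :=
  hadamard_equiv (augment X1) (augment X2).

Definition coord_perm k (s : 'S_k) (z : 'rV[int]_k) : 'rV[int]_k :=
  \row_j z 0 (s j).
Definition sign_change k (i : 'I_k) (z : 'rV[int]_k) : 'rV[int]_k :=
  \row_j (if j == i then - z 0 j else z 0 j).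
Definition R_op k (i : 'I_k) (z : 'rV[int]_k) : 'rV[int]_k :=
  \row_j (if j == i then z 0 i else z 0 j * z 0 i).

(* G(k)^OD: all finite compositions of generators.  Since each generator is a
   permutation of finite order of {-1,1}^k, this monoid equals the generated group
   (on {-1,1}^k, where it is applied). *)
Inductive GOD (k : nat) : ('rV[int]_k -> 'rV[int]_k) -> Prop :=
| GOD_id : GOD (fun z => z)
| GOD_perm (s : 'S_k) g : GOD g -> GOD (fun z => coord_perm s (g z))
| GOD_sign (i : 'I_k) g : GOD g -> GOD (fun z => sign_change i (g z))
| GOD_R (i : 'I_k) g : GOD g -> GOD (fun z => R_op i (g z)).

Definition rows N k (X : 'M[int]_(N, k)) : seq 'rV[int]_k :=
  [seq row i X | i <- enum 'I_N].

From mathcomp Require Import all_boot all_order all_algebra all_fingroup.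
Set Implicit Arguments. Unset Strict Implicit. Unset Printing Implicit Defensive.
Import GRing.Theory.
Local Open Scope ring_scope.

(* X and Y are OD-equivalent iff, for a suitable
   matching of their rows, every row of [1, X] is, up to a sign, the image of
   its partner row of [1, Y] under one fixed signed permutation (s, e) of the
   1 + k columns.  Rescaling such an image so that its leading entry is 1
   again and dropping that entry defines a map [od_map s e] of {-1,1}^k.
   These maps compose like signed permutations and every generator of
   G(k)^OD is one of them (R_i comes from the transposition of the columns 0
   and i + 1).  Conversely [od_map s e] is the R generator that brings column
   s 0 to the front, followed by a coordinate permutation and sign changes. *)

Lemma unitz_mulzz (x : int) : x \is a GRing.unit -> x * x = 1.
Proof. exact: mulVr. Qed.

Lemma unitz_mulKz (x y : int) : x \is a GRing.unit -> x * (x * y) = y.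
Proof. by move=> ux; rewrite mulrA unitz_mulzz ?mul1r. Qed.

Lemma unitz_mulzK (x y : int) : x \is a GRing.unit -> y * x * x = y.
Proof. by move=> ux; rewrite -mulrA unitz_mulzz ?mulr1. Qed.

Lemma pm1_mxP m n (A : 'M[int]_(m, n)) :
  reflect (forall i j, A i j \is a GRing.unit) (pm1_mx A).
Proof. exact: (forallPP (fun i => forallP)). Qed.

Lemma pm1_rowP k (z : 'rV[int]_k) :
  reflect (forall j, z 0 j \is a GRing.unit) (pm1_mx z).
Proof.
by apply: (iffP (pm1_mxP z)) => [uz j | uz i j]; rewrite ?ord1; apply: uz.
Qed.

Lemma pm1_row m n (A : 'M[int]_(m, n)) i : pm1_mx A -> pm1_mx (row i A).
Proof. by move/pm1_mxP=> uA; apply/pm1_mxP => i' j; rewrite mxE. Qed.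

Lemma row_augment N k (X : 'M[int]_(N, k)) i :
  row i (augment X) = augment (row i X).
Proof. by rewrite /augment row_row_mx row_const. Qed.

Lemma augment0 k (z : 'rV[int]_k) : augment z 0 ord0 = 1.
Proof.
have -> : ord0 = lshift k (ord0 : 'I_1) by apply: val_inj.
by rewrite row_mxEl mxE.
Qed.

Lemma augment_lift k (z : 'rV[int]_k) b : augment z 0 (lift ord0 b) = z 0 b.
Proof.
have -> : lift ord0 b = rshift 1 b by apply: val_inj.
by rewrite row_mxEr.
Qed.

Lemma pm1_augment k (z : 'rV[int]_k) : pm1_mx z -> pm1_mx (augment z).
Proof.
move/pm1_rowP=> uz; apply/pm1_rowP => j.
by case: (unliftP ord0 j) => [b|] ->; rewrite ?augment0 ?augment_lift.
Qed.

Definition signed_col_perm n (s : 'S_n) (e : 'I_n -> int) (w : 'rV[int]_n) :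
  'rV[int]_n := \row_j (w 0 (s j) * e j).

Lemma signed_col_permZ n (s : 'S_n) e c w :
  signed_col_perm s e (c *: w) = c *: signed_col_perm s e w.
Proof. by apply/rowP => j; rewrite !mxE mulrA. Qed.

Lemma signed_col_permM n (s1 s2 : 'S_n) e1 e2 w :
  signed_col_perm s2 e2 (signed_col_perm s1 e1 w) =
  signed_col_perm (s2 * s1) (fun j => e1 (s2 j) * e2 j) w.
Proof. by apply/rowP => j; rewrite !mxE permM mulrA. Qed.

Definition unaugment k (w : 'rV[int]_k.+1) : 'rV[int]_k :=
  \row_b (w 0 (lift ord0 b) * w 0 ord0).

Lemma unaugmentK k : cancel (@augment 1 k) (@unaugment k).
Proof.
by move=> z; apply/rowP => b; rewrite mxE augment_lift augment0 mulr1.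
Qed.

Lemma unaugmentZ k c (w : 'rV[int]_k.+1) :
  c \is a GRing.unit -> unaugment (c *: w) = unaugment w.
Proof.
by move=> uc; apply/rowP => b; rewrite !mxE mulrACA unitz_mulzz ?mul1r.
Qed.

Lemma augment_unaugment k (w : 'rV[int]_k.+1) :
  w 0 ord0 \is a GRing.unit -> augment (unaugment w) = w 0 ord0 *: w .
Proof.
move=> uw; apply/rowP => j; case: (unliftP ord0 j) => [b|] ->.
  by rewrite augment_lift !mxE mulrC.
by rewrite augment0 mxE unitz_mulzz.
Qed.

Lemma lift_perm_of_fixed n (p : 'S_n.+1) :
  p ord0 = ord0 -> exists q : 'S_n, p = lift_perm ord0 ord0 q.
Proof.
move=> p0.
have p_lift b : {c | p (lift ord0 b) = lift ord0 c}.
  case: (unliftP ord0 (p (lift ord0 b))) => [c -> | p_b]; first by exists c.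
  have := neq_lift ord0 b.
  by rewrite (perm_inj (etrans p_b (esym p0))) eqxx.
have q_inj : injective (fun b => sval (p_lift b)).
  move=> b1 b2 eq_c; apply/(@lift_inj _ ord0)/(@perm_inj _ p).
  by rewrite (svalP (p_lift b1)) (svalP (p_lift b2)) eq_c.
exists (perm q_inj); apply/permP => j.
case: (unliftP ord0 j) => [b|] ->; last by rewrite lift_perm_id.
by rewrite lift_perm_lift permE; exact: svalP (p_lift b).
Qed.

Section ODMaps.

Variable k : nat.
Implicit Types (z : 'rV[int]_k) (g h : 'rV[int]_k -> 'rV[int]_k).
Implicit Types (s : 'S_k.+1) (e : 'I_k.+1 -> int).

Definition od_map s e z : 'rV[int]_k :=
  unaugment (signed_col_perm s e (augment z)).

Lemma od_mapE s e z b :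
  od_map s e z 0 b =
  augment z 0 (s (lift ord0 b)) * e (lift ord0 b) *
  (augment z 0 (s ord0) * e ord0).
Proof. by rewrite /od_map !mxE. Qed.

Lemma eq_od_map s e1 e2 : e1 =1 e2 -> od_map s e1 =1 od_map s e2.
Proof. by move=> eq_e z; apply/rowP => b; rewrite !od_mapE !eq_e. Qed.

Lemma od_map1 z : od_map 1 (fun=> 1) z = z.
Proof.
by apply/rowP => b; rewrite od_mapE !perm1 augment_lift augment0 !mulr1.
Qed.

Lemma augment_od_map s e z :
    pm1_mx z -> e ord0 \is a GRing.unit ->
  augment (od_map s e z) =
  (augment z 0 (s ord0) * e ord0) *: signed_col_perm s e (augment z).
Proof.
move=> /pm1_augment/pm1_rowP uz ue.
by rewrite augment_unaugment mxE // unitrM uz.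
Qed.

Lemma od_map_comp s1 e1 s2 e2 z :
    pm1_mx z -> e1 ord0 \is a GRing.unit ->
  od_map s2 e2 (od_map s1 e1 z) =
  od_map (s2 * s1) (fun j => e1 (s2 j) * e2 j) z.
Proof.
move=> pz ue; have /pm1_rowP uz := pm1_augment pz.
rewrite {1}/od_map augment_od_map // signed_col_permZ unaugmentZ.
  by rewrite signed_col_permM.
by rewrite unitrM uz.
Qed.

Lemma coord_perm_od_map (q : 'S_k) :
  coord_perm q =1 od_map (lift_perm ord0 ord0 q) (fun=> 1).
Proof.
move=> z; apply/rowP => b.
by rewrite od_mapE lift_perm_lift lift_perm_id augment_lift augment0 mxE !mulr1.
Qed.

Lemma sign_change_od_map i :
  sign_change i =1 od_map 1 (fun j => if j == lift ord0 i then -1 else 1).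
Proof.
move=> z; apply/rowP => b.
rewrite od_mapE !perm1 augment_lift augment0 mxE (inj_eq lift_inj).
rewrite (negbTE (neq_lift _ _)).
by case: eqP; rewrite !mulr1 ?mulrN1.
Qed.

Lemma R_op_od_map i :
  R_op i =1 od_map (tperm ord0 (lift ord0 i)) (fun=> 1).
Proof.
move=> z; apply/rowP => b.
rewrite od_mapE tpermL augment_lift mxE !mulr1.
case: (eqVneq b i) => [->|neq_bi]; first by rewrite tpermR augment0 mul1r.
by rewrite tpermD ?augment_lift // ?(inj_eq lift_inj) 1?eq_sym.
Qed.

Definition is_od_map g : Prop :=
  exists s e, (forall j, e j \is a GRing.unit) /\
              forall z, pm1_mx z -> g z = od_map s e z.

Lemma is_od_map_comp h s e g :
    (forall j, e j \is a GRing.unit) -> h =1 od_map s e ->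
  is_od_map g -> is_od_map (h \o g).
Proof.
move=> ue hE [s1 [e1 [ue1 gE]]].
exists (s * s1)%g, (fun j => e1 (s j) * e j); split=> [j | z pz].
  by rewrite unitrM ue1 ue.
by rewrite /= gE // hE od_map_comp.
Qed.

Lemma GOD_is_od_map g : GOD g -> is_od_map g.
Proof.
elim=> [|q {}g _ IH|i {}g _ IH|i {}g _ IH].
- by exists 1%g, (fun=> 1); split=> // z _; rewrite od_map1.
- exact: is_od_map_comp (coord_perm_od_map q) IH.
- apply: is_od_map_comp (sign_change_od_map i) IH => j.
  by case: (j == _).
- exact: is_od_map_comp (R_op_od_map i) IH.
Qed.

Lemma GOD_comp g h : GOD g -> GOD h -> GOD (g \o h).
Proof.
move=> Gg Gh; elim: Gg => [|q {}g _ IH|i {}g _ IH|i {}g _ IH] //.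
- exact: GOD_perm IH.
- exact: GOD_sign IH.
- exact: GOD_R IH.
Qed.

Lemma od_map_signs_GOD e :
  (forall j, e j \is a GRing.unit) -> exists2 g, GOD g & g =1 od_map 1 e.
Proof.
move=> ue.
pose flips := [seq b : 'I_k <- enum 'I_k | e (lift ord0 b) * e ord0 == -1].
exists (fun z => foldr (@sign_change k) z flips).
  by elim: flips => [|b flips IH]; [exact: GOD_id k | exact: GOD_sign IH].
have flipsE z b l : uniq l ->
    foldr (@sign_change k) z l 0 b = if b \in l then - z 0 b else z 0 b.
  elim: l => [|a l IH] //= /andP[a_l uniq_l].
  rewrite mxE IH // in_cons; case: (eqVneq b a) => [->|//].
  by rewrite (negbTE a_l).
move=> z; apply/rowP => b.
rewrite flipsE; last exact: filter_uniq (enum_uniq _).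
rewrite mem_filter mem_enum andbT.
rewrite od_mapE !perm1 augment_lift augment0 mul1r -mulrA.
have /orP[/eqP -> | /eqP ->] : e (lift ord0 b) * e ord0 \is a GRing.unit.
- by rewrite unitrM !ue.
- by rewrite mulr1.
- by rewrite mulrN1.
Qed.

Lemma od_map_GOD s e :
    (forall j, e j \is a GRing.unit) ->
  exists2 g, GOD g & forall z, pm1_mx z -> g z = od_map s e z.
Proof.
move=> ue; set rho := tperm ord0 (s ord0).
have [gR GOD_gR gRE] : exists2 g, GOD g & g =1 od_map rho (fun=> 1).
  rewrite {}/rho; case: (unliftP ord0 (s ord0)) => [a|] ->.
    by exists (R_op a); [exact: GOD_R (GOD_id k) | exact: R_op_od_map].
  by exists id => [|z]; rewrite ?tperm1 ?od_map1 //; exact: GOD_id.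
have [q sE] : exists q, (s * rho)%g = lift_perm ord0 ord0 q.
  by apply: lift_perm_of_fixed; rewrite permM tpermR.
have [gS GOD_gS gSE] := od_map_signs_GOD ue.
exists (gS \o coord_perm q \o gR).
  by apply: GOD_comp (GOD_comp GOD_gS (GOD_perm q (GOD_id k))) GOD_gR.
move=> z pz /=; rewrite gSE coord_perm_od_map gRE.
rewrite [od_map (lift_perm _ _ _) _ _]od_map_comp // od_map_comp //.
rewrite -sE -mulgA tperm2 mulg1 mul1g.
by apply: eq_od_map => j; rewrite !mul1r.
Qed.

End ODMaps.

Lemma hadamard_mxE m n (s1 : 'S_m) (s2 : 'S_n) d1 d2 (A : 'M[int]_(m, n)) i j :
  (perm_mx s1 *m diag_mx d1 *m A *m diag_mx d2 *m perm_mx s2) i j =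
  d1 0 (s1 i) * A (s1 i) ((s2^-1)%g j) * d2 0 ((s2^-1)%g j).
Proof.
rewrite -[s2]invgK -col_permE mxE mul_mx_diag mxE invgK.
by rewrite -mulmxA -row_permE mxE mul_diag_mx mxE.
Qed.

Lemma hadamard_equivP m n (A B : 'M[int]_(m, n)) :
  hadamard_equiv A B <->
  exists (s1 : 'S_m) (s2 : 'S_n) (d1 : 'I_m -> int) (d2 : 'I_n -> int),
    [/\ forall i, d1 i \is a GRing.unit, forall j, d2 j \is a GRing.unit &
        forall i, row i A = d1 i *: signed_col_perm s2 d2 (row (s1 i) B)].
Proof.
split=> [[s1 [s2 [d1 [d2 [/pm1_rowP ud1 /pm1_rowP ud2 BE]]]]] |].
  exists s1^-1%g, s2, (d1 0), (d2 0); split=> // i; apply/rowP => j.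
  by rewrite !mxE BE hadamard_mxE permKV permK unitz_mulzK // unitz_mulKz.
case=> s1 [s2] [d1] [d2] [ud1 ud2 rowAE].
exists s1^-1%g, s2, (\row_i d1 i), (\row_j d2 j).
split; try by apply/pm1_rowP => j; rewrite mxE.
apply/matrixP => i j; rewrite hadamard_mxE !mxE.
have := congr1 (fun r : 'rV[int]_n => r 0 ((s2^-1)%g j)) (rowAE ((s1^-1)%g i)).
by rewrite !mxE !permKV => ->; rewrite unitz_mulKz // unitz_mulzK.
Qed.

Lemma perm_eq_rowsP N k (X Y : 'M[int]_(N, k)) (g : 'rV[int]_k -> 'rV[int]_k) :
  reflect (exists s : 'S_N, forall i, row i X = g (row (s i) Y))
          (perm_eq (rows X) (map g (rows Y))).
Proof.
have -> : map g (rows Y) = [tuple g (row i Y) | i < N].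
  by rewrite /rows -map_comp.
apply: (iffP tuple_permP) => [[s rowsE] | [s rowXE]]; exists s.
  move=> i; have /eq_in_map/(_ i (mem_enum _ i)) := rowsE.
  by rewrite /= tnth_mktuple.
by apply/eq_in_map => i _ /=; rewrite tnth_mktuple.
Qed.

Theorem lemma5 (N k t1 t2 : nat) (X Y : 'M[int]_(N, k)) :
  (1 <= t1)%N -> (1 <= t2)%N -> isOA t1 X -> isOA t2 Y ->
  (OD_equiv X Y <->
   exists g : 'rV[int]_k -> 'rV[int]_k,
     GOD g /\ perm_eq (rows X) (map g (rows Y))).
Proof.
move=> _ _ _ [_ pmY _].
have pmYi i : pm1_mx (row i Y) := pm1_row i pmY.
split.
- case/hadamard_equivP=> s1 [s2] [d1] [d2] [ud1 ud2 rowXE].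
  have [g GOD_g gE] := od_map_GOD s2 ud2.
  exists g; split=> //; apply/perm_eq_rowsP; exists s1 => i.
  by rewrite gE // -[row i X]unaugmentK -row_augment rowXE row_augment
             unaugmentZ.
- case=> g [/GOD_is_od_map [s [e [ue gE]]] /perm_eq_rowsP [s1 rowXE]].
  apply/hadamard_equivP.
  exists s1, s, (fun i => augment (row (s1 i) Y) 0 (s ord0) * e ord0), e.
  split=> // [i | i].
    by rewrite unitrM ue andbT; apply/pm1_rowP/pm1_augment.
  by rewrite !row_augment rowXE gE // augment_od_map.
Qed.
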